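(* In the full-information online setting for length-$\ell$ menus of lotteries over $m$ items with an arbitrary sequence of buyer valuations, running the weighted-majority algorithm (choose expert $k$ with probability proportional to $(1+\beta)^{\mathrm{Rev}_k/(mH)}$, $\mathrm{Rev}_k$ its cumulative revenue so far) over the finite set $\mathcal X$ of length-$\ell$ menus whose allocation probabilities lie in $\{0\}\cup\{(1-\alpha)^s: s\in\mathbb Z_{\ge0},(1-\alpha)^s\ge\alpha/(Hm)\}$ and whose prices are integer multiples of $\alpha$ in $[0,mH]$, with $\alpha=T^{-1}$, $\beta=T^{-1/2}$ (the discretization corresponding to $K=T^{1/2}$, $\delta=T^{-1/2}$), has regret $\tilde O(m^2H\ell\sqrt T)$.
   Context: A length-$\ell$ menu of lotteries over $m$ items consists of entries $(\vec\phi^{(j)},p^{(j)})$, $j=1,\dots,\ell$, with $\vec\phi^{(j)}\in[0,1]^m$ and $p^{(j)}\in[0,mH]$, plus the null entry $(\vec0,0)$. A buyer with item values $v(\vec e_i)\in[0,H]$ (additive or unit-demand; for unit-demand $\sum_i\phi^{(j)}[i]\le1$) selects an entry maximizing $\sum_i v(\vec e_i)\phi^{(j)}[i]-p^{(j)}$ and pays its price (the revenue $u_t$). In full information the learner observes $u_t$ on all menus after each round. Regret is $\mathbb E[\max_{\vec\rho}\sum_t u_t(\vec\rho)-\sum_t u_t(\vec\rho_t)]$ over all length-$\ell$ menus. *)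

From HB Require Import structures.
From mathcomp Require Import all_boot all_order all_algebra.
From mathcomp Require Import all_classical all_reals all_analysis.
Set Implicit Arguments. Unset Strict Implicit. Unset Printing Implicit Defensive.
Import Order.TTheory GRing.Theory Num.Theory.
Local Open Scope classical_set_scope.
Local Open Scope ring_scope.

Section Menus.
Variable R : realType.

(* A length-l menu over m items: entries j : 'I_l, each an allocation vector
   (a row vector in R^m) and a price.  The null entry (0,0) is implicit. *)
Definition menu (m l : nat) := {ffun 'I_l -> 'rV[R]_m * R}.

(* A buyer is described by its item values v(e_i), a row vector in R^m. *)
Definition valuation (m : nat) := 'rV[R]_m.

(* Validity of a menu: phi^(j) in [0,1]^m, p^(j) in [0, mH];
   for unit-demand buyers (ud = true) additionally sum_i phi^(j)[i] <= 1. *)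
Definition valid_menu (ud : bool) (m l : nat) (H : R) (rho : menu m l) : Prop :=
  forall j : 'I_l,
    (forall i : 'I_m, 0 <= (rho j).1 0 i <= 1) /\
    0 <= (rho j).2 <= m%:R * H /\
    (ud -> \sum_(i < m) (rho j).1 0 i <= 1).

Definition entry_utility (m : nat) (v : valuation m) (e : 'rV[R]_m * R) : R :=
  \sum_(i < m) v 0 i * e.1 0 i - e.2.

(* Best achievable utility, including the null entry (utility 0). *)
Definition best_utility (m l : nat) (rho : menu m l) (v : valuation m) : R :=
  \big[Num.max/0]_(j < l) entry_utility v (rho j).

(* Revenue u(rho; v): the buyer picks a utility-maximizing entry (the null
   entry included, price 0); ties are broken in favour of the highest price. *)
Definition revenue (m l : nat) (rho : menu m l) (v : valuation m) : R :=
  \big[Num.max/0]_(j < l | entry_utility v (rho j) == best_utility rho v)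
     (rho j).2.

Definition alloc_level (m : nat) (H alpha x : R) : Prop :=
  x = 0 \/ exists s : nat, x = (1 - alpha) ^+ s /\ alpha / (H * m%:R) <= (1 - alpha) ^+ s.

Definition price_level (alpha p : R) : Prop :=
  exists k : nat, p = k%:R * alpha.

Definition disc_menus (ud : bool) (m l : nat) (H alpha : R) : set (menu m l) :=
  [set rho | valid_menu ud H rho /\
     (forall (j : 'I_l) (i : 'I_m), alloc_level m H alpha ((rho j).1 0 i)) /\
     (forall j : 'I_l, price_level alpha (rho j).2)].

Definition cum_revenue (m l : nat) (v : nat -> valuation m) (rho : menu m l) (t : nat) : R :=
  \sum_(s < t) revenue rho (v s).

Definition wm_weight (m l : nat) (H beta : R) (v : nat -> valuation m)
    (rho : menu m l) (t : nat) : R :=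
  (1 + beta) `^ (cum_revenue v rho t / (m%:R * H)).

(* Expected revenue of the weighted-majority algorithm run over the expert
   set X in round t (expert chosen with probability proportional to its
   weight, computed from the revenues of rounds 0..t-1). *)
Definition wm_expected_revenue (m l : nat) (X : set (menu m l)) (H beta : R)
    (v : nat -> valuation m) (t : nat) : R :=
  (\sum_(rho \in X) wm_weight H beta v rho t * revenue rho (v t)) /
  (\sum_(rho \in X) wm_weight H beta v rho t).

Definition opt_revenue (ud : bool) (m l : nat) (H : R) (v : nat -> valuation m)
    (T : nat) : R :=
  sup [set \sum_(t < T) revenue rho (v t) | rho in [set rho : menu m l | valid_menu ud H rho]].

Definition wm_regret (ud : bool) (m l : nat) (H : R) (v : nat -> valuation m)
    (T : nat) : R :=
  let alpha : R := (T%:R)^-1 in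
  let beta : R := (Num.sqrt (T%:R))^-1 in
  @opt_revenue ud m l H v T -
  \sum_(t < T) @wm_expected_revenue m l (@disc_menus ud m l H alpha) H beta v t.
End Menus.

From HB Require Import structures.
From mathcomp Require Import all_boot all_order all_algebra.
From mathcomp Require Import all_classical all_reals all_analysis.
From mathcomp Require Import lra ring.
Import Order.TTheory GRing.Theory Num.Theory.
Local Open Scope ring_scope.
Set Implicit Arguments. Unset Strict Implicit. Unset Printing Implicit Defensive.

(* The proof combines three ingredients.
   1. Weighted majority: against any fixed expert of a finite list with gains
      in [0, M], multiplicative weights (1+b)^(gain/M) lose at most
      b T M + M ln N / b (potential argument on the total weight).
   2. Discretization: every valid menu rho can be rounded into the finite
      class X (allocations rounded down to 0 or a level (1-a)^s, prices
      discounted by (1-d) and rounded down to the grid a N) at a per-round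
      revenue loss of d M + (2 a M + a)/d + a, by a robustness argument on
      the buyer's choice (the discount keeps the buyer from switching to
      much cheaper entries).
   3. Counting: X is encoded by ((A+1)^m (P+1))^l codes with A, P polynomial
      in m H T, so ln |X| = O(l m log(mHT)).
   With a = 1/T and b = d = 1/sqrt T the three bounds add up to
   10 m^2 H l sqrt T (1 + ln(mHT)), which proves mainTheorem15. *)

Section RealInequalities.
Variable R : realType.

Lemma powR_le_affine (b x : R) : 0 <= b -> 0 <= x <= 1 ->
  (1 + b) `^ x <= 1 + b * x.
Proof.
move=> b0 /andP[x0 x1].
have := @convex_expR R (Itv01 x0 x1) (ln (1 + b)) 0.
rewrite !convRE /= expR0 mulr0 addr0 lnK ?posrE; last by lra.
rewrite /powR gt_eqF; last by lra.
by move/le_trans; apply; rewrite /unstable.onem; lra.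
Qed.

(* Second-order lower bound ln(1+b) >= b - b^2, from ln(1+x) <= x at
   x = -b/(1+b). *)
Lemma ln1D_ge (b : R) : 0 <= b -> b - b ^+ 2 <= ln (1 + b).
Proof.
move=> b0.
have q_gt : -1 < - (b / (1 + b)).
  by rewrite ltrN2 ltr_pdivrMr; lra.
have := le_ln1Dx q_gt.
have -> : 1 + - (b / (1 + b)) = (1 + b)^-1 by field; lra.
rewrite lnV ?posrE; last by lra.
have : b - b ^+ 2 <= b / (1 + b) by rewrite ler_pdivlMr; nra.
lra.
Qed.

Lemma geometric_bernoulli (a : R) (s : nat) : 0 <= a <= 1 ->
  (1 - a) ^+ s * (1 + s%:R * a) <= 1.
Proof.
move=> /andP[a0 a1]; elim: s => [|s IH]; first by rewrite expr0 mul0r addr0 mulr1.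
have p0 : 0 <= (1 - a) ^+ s by rewrite exprn_ge0 // subr_ge0.
have step : (1 - a) * (1 + s.+1%:R * a) <= 1 + s%:R * a.
  by rewrite -addn1 natrD; have : 0 <= s%:R :> R by []; nra.
rewrite exprSr -mulrA; apply: le_trans IH.
by rewrite ler_wpM2l.
Qed.

(* The logarithm of a natural number is nonnegative (ln 0 = 0). *)
Lemma ln_natr_ge0 (n : nat) : 0 <= ln (n%:R : R).
Proof. by case: n => [|n]; [rewrite ln0 | rewrite ln_ge0 // ler1n]. Qed.

Lemma ler_sum_mem (I : eqType) (s : seq I) (F : I -> R) (i0 : I) :
  (forall i, i \in s -> 0 <= F i) -> i0 \in s -> F i0 <= \sum_(i <- s) F i.
Proof.
elim: s => [|a s IH] //= F_ge0; rewrite big_cons in_cons => /orP[/eqP->|i0s].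
  rewrite lerDl big_seq sumr_ge0 // => i ins.
  by apply: F_ge0; rewrite in_cons ins orbT.
apply: le_trans (IH _ i0s) _ => [i ins|]; first by apply: F_ge0; rewrite in_cons ins orbT.
by rewrite lerDr F_ge0 // mem_head.
Qed.

End RealInequalities.

Section WeightedMajority.
Variables (R : realType) (I : eqType) (experts : seq I) (gain : I -> nat -> R).
Variables (M b : R) (T : nat).
Hypothesis M_gt0 : 0 < M.
Hypothesis b_gt0 : 0 < b.
Hypothesis gain_bounded :
  forall i t, i \in experts -> (t < T)%N -> 0 <= gain i t <= M.

Definition cum_gain (i : I) (t : nat) : R := \sum_(u < t) gain i u.

Definition expert_weight (i : I) (t : nat) : R := (1 + b) `^ (cum_gain i t / M).

Definition total_weight (t : nat) : R := \sum_(i <- experts) expert_weight i t.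

Definition wm_gain (t : nat) : R :=
  (\sum_(i <- experts) expert_weight i t * gain i t) / total_weight t.

Lemma expert_weight_gt0 i t : 0 < expert_weight i t.
Proof. by apply: powR_gt0; apply: addr_gt0. Qed.

Lemma expert_weight_le_total i t : i \in experts ->
  expert_weight i t <= total_weight t.
Proof.
by apply: ler_sum_mem => j _; apply/ltW/expert_weight_gt0.
Qed.

Lemma total_weight0 : total_weight 0 = (size experts)%:R.
Proof.
rewrite /total_weight -sum1_size natr_sum; apply: eq_bigr => i _.
by rewrite /expert_weight /cum_gain big_ord0 mul0r powRr0.
Qed.

Lemma total_weight_step t : (t < T)%N -> 0 < total_weight t ->
  total_weight t.+1 <= total_weight t * expR (b / M * wm_gain t).
Proof.
move=> tT W_gt0.
have -> : total_weight t.+1 =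
    \sum_(i <- experts) expert_weight i t * (1 + b) `^ (gain i t / M).
  apply: eq_bigr => i _; rewrite /expert_weight /cum_gain big_ord_recr /=.
  by rewrite mulrDl powRD //; apply/implyP => _; rewrite gt_eqF // addr_gt0.
have affine : \sum_(i <- experts) expert_weight i t * (1 + b) `^ (gain i t / M)
    <= \sum_(i <- experts) expert_weight i t * (1 + b * (gain i t / M)).
  rewrite big_seq [X in _ <= X]big_seq; apply: ler_sum => i i_in.
  rewrite ler_pM2l ?expert_weight_gt0 //; apply: powR_le_affine; first exact: ltW.
  have /andP[g0 gM] := gain_bounded i_in tT.
  by rewrite divr_ge0 ?(ltW M_gt0) //= ler_pdivrMr // mul1r.
have linear : \sum_(i <- experts) expert_weight i t * (1 + b * (gain i t / M))
    = total_weight t * (1 + b / M * wm_gain t).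
  have -> : total_weight t * (1 + b / M * wm_gain t) =
      total_weight t + b / M * \sum_(i <- experts) expert_weight i t * gain i t.
    by rewrite /wm_gain; field; rewrite !gt_eqF.
  rewrite big_distrr -big_split; apply: eq_bigr => i _ /=.
  by field; rewrite gt_eqF.
apply: (le_trans affine); rewrite linear ler_pM2l //.
exact: expR_ge1Dx.
Qed.

Lemma total_weight_bound t : (t <= T)%N -> experts != [::] ->
  total_weight t <= (size experts)%:R * expR (b / M * \sum_(u < t) wm_gain u).
Proof.
move=> + nonempty; elim: t => [|t IH] tT.
  by rewrite total_weight0 big_ord0 mulr0 expR0 mulr1.
have [i i_in] : exists i, i \in experts by case: experts nonempty => // i ? _; exists i; exact: mem_head.
have W_gt0 : 0 < total_weight t.
  exact: lt_le_trans (expert_weight_gt0 i t) (expert_weight_le_total t i_in).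
apply: le_trans (total_weight_step tT W_gt0) _.
rewrite big_ord_recr /= mulrDr expRD mulrA ler_pM2r ?expR_gt0 //.
exact/IH/ltnW.
Qed.

(* Potential argument: comparing one expert's weight with the total weight. *)
Lemma wm_potential i0 : i0 \in experts ->
  cum_gain i0 T * ln (1 + b) <= M * ln (size experts)%:R + b * \sum_(t < T) wm_gain t.
Proof.
move=> i0_in.
have nonempty : experts != [::] by case: experts i0_in.
have N_gt0 : 0 < (size experts)%:R :> R by rewrite ltr0n lt0n size_eq0.
have weight_le := le_trans (expert_weight_le_total T i0_in)
  (total_weight_bound (leqnn T) nonempty).
move: weight_le; rewrite /expert_weight /powR gt_eqF ?addr_gt0 //.
rewrite -[X in _ <= X * _]lnK ?posrE // -expRD ler_expR.
rewrite -(ler_pM2l M_gt0) mulrA mulrCA divff ?gt_eqF // mulr1.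
by rewrite mulrDr mulrA mulrCA divff ?gt_eqF // mulr1.
Qed.

Lemma wm_bound i0 : i0 \in experts ->
  cum_gain i0 T <= \sum_(t < T) wm_gain t + b * T%:R * M
                   + M * ln (size experts)%:R / b.
Proof.
move=> i0_in.
have potential := wm_potential i0_in.
set x := cum_gain i0 T in potential *.
set S := \sum_(t < T) wm_gain t in potential *.
set K := M * ln (size experts)%:R in potential *.
have x_ge0 : 0 <= x.
  by rewrite sumr_ge0 // => u _; have /andP[] := gain_bounded i0_in (ltn_ord u).
have x_le : x <= T%:R * M.
  have : x <= \sum_(u < T) M.
    by apply: ler_sum => u _; have /andP[] := gain_bounded i0_in (ltn_ord u).
  by rewrite sumr_const card_ord mulr_natl.
have second_order : x * (b - b ^+ 2) <= K + b * S.
  by apply: le_trans potential; rewrite ler_wpM2l // ln1D_ge // ltW.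
have cancel_b : b * (K / b) = K by field; rewrite gt_eqF.
rewrite -(ler_pM2l b_gt0) !mulrDr cancel_b.
have : b * (b * x) <= b * (b * (T%:R * M)) by rewrite !ler_wpM2l // ltW.
nra.
Qed.

End WeightedMajority.

Lemma bigmax_attained {R : realDomainType} {I : Type} (r : seq I) (P : pred I)
    (F : I -> R) (x0 : R) :
  \big[Num.max/x0]_(i <- r | P i) F i = x0 \/
  exists2 i, P i & \big[Num.max/x0]_(i <- r | P i) F i = F i.
Proof.
elim: r => [|a r IH]; first by left; rewrite big_nil.
rewrite big_cons; case: ifP => Pa //.
by case: (leP (F a) (\big[Num.max/x0]_(i <- r | P i) F i)) => _; last by right; exists a.
Qed.

Section BuyerChoice.
Variables (R : realType) (m l : nat).
Implicit Types (rho : menu R m l) (v : valuation R m).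

Definition alloc_value v (phi : 'rV[R]_m) : R := \sum_(i < m) v 0 i * phi 0 i.

(* The null entry guarantees nonnegative utility. *)
Lemma best_utility_ge0 rho v : 0 <= best_utility rho v.
Proof. exact: bigmax_ge_id. Qed.

Lemma entry_utility_le_best rho v j : entry_utility v (rho j) <= best_utility rho v.
Proof. exact: le_bigmax. Qed.

Lemma revenue_ge0 rho v : 0 <= revenue rho v.
Proof. exact: bigmax_ge_id. Qed.

(* Any utility-maximizing entry yields at most the revenue (ties are broken
   towards the highest price). *)
Lemma price_le_revenue rho v j : entry_utility v (rho j) = best_utility rho v ->
  (rho j).2 <= revenue rho v.
Proof. by move=> /eqP j_best; apply: le_bigmax_cond. Qed.

Lemma revenue_le rho v (M : R) : 0 <= M -> (forall j, (rho j).2 <= M) ->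
  revenue rho v <= M.
Proof. by move=> M_ge0 price_le; apply: bigmax_le. Qed.

(* The discount makes expensive entries relatively
   more attractive, so the buyer cannot switch to a much cheaper entry. *)
Lemma revenue_perturbation rho rho' v (M d eta a : R) :
  0 < d -> 0 <= eta -> 0 <= a -> 0 <= M ->
  (forall j, (rho j).2 <= M) ->
  (forall j, (1 - d) * (rho j).2 - a <= (rho' j).2 <= (1 - d) * (rho j).2) ->
  (forall j, alloc_value v (rho j).1 - eta <= alloc_value v (rho' j).1
             <= alloc_value v (rho j).1) ->
  revenue rho v <= revenue rho' v + (d * M + (eta + a) / d + a).
Proof.
move=> d_gt0 eta_ge0 a_ge0 M_ge0 price_le price_disc value_loss.
have dM_ge0 : 0 <= d * M := mulr_ge0 (ltW d_gt0) M_ge0.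
have ratio_ge0 : 0 <= (eta + a) / d := divr_ge0 (addr_ge0 eta_ge0 a_ge0) (ltW d_gt0).
have rev'_ge0 := revenue_ge0 rho' v.
rewrite [revenue rho v]/revenue.
have [->|[j /eqP j_best ->]] := bigmax_attained (index_enum 'I_l)
  (fun j => entry_utility v (rho j) == best_utility rho v) (fun j => (rho j).2) 0.
  lra.
have U_ge0 := best_utility_ge0 rho v.
have /andP[pj_lo pj_hi] := price_disc j; have /andP[Vj_lo Vj_hi] := value_loss j.
have pj_M := price_le j.
have uj' := entry_utility_le_best rho' v j.
move: j_best uj'; rewrite /entry_utility -!/(alloc_value _ _) => j_best uj'.
have [best0|[k _ best_k]] := bigmax_attained (index_enum 'I_l) predT
  (fun j => entry_utility v (rho' j)) 0.
- (* The buyer leaves rho' empty-handed, so the price of j was small. *)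
  have : d * (rho j).2 <= eta + a.
    by move: uj'; rewrite /best_utility best0; lra.
  rewrite -ler_pdivlMl // mulrC; lra.
- (* The buyer switches to entry k of rho', whose price is close to p_j. *)
  have best'_k : best_utility rho' v = entry_utility v (rho' k) := best_k.
  have rev_k := price_le_revenue (esym best'_k).
  have uk := entry_utility_le_best rho v k.
  rewrite best'_k /entry_utility -!/(alloc_value _ _) in uj'.
  rewrite -j_best /entry_utility -!/(alloc_value _ _) in uk.
  have /andP[pk_lo pk_hi] := price_disc k; have /andP[Vk_lo Vk_hi] := value_loss k.
  have pk_M := price_le k.
  have : d * ((rho j).2 - (rho k).2) <= eta + a by nra.
  rewrite -ler_pdivlMl // mulrC => gap.
  have : d * (rho k).2 <= d * M by rewrite ler_pM2l.
  lra.
Qed.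

End BuyerChoice.

Section Rounding.
Variable R : realType.

Lemma geometric_below (a y : R) : 0 < a <= 1 -> 0 < y ->
  exists n : nat, (1 - a) ^+ n <= y.
Proof.
move=> a01 y_gt0; have /andP[a_gt0 _] := a01.
set n := (Num.truncn ((a * y)^-1)).+1; exists n.
have ay_gt0 : 0 < a * y by rewrite mulr_gt0.
have n_large : 1 < n%:R * (a * y).
  by rewrite -ltr_pdivrMr // div1r truncnS_gt.
have := @geometric_bernoulli R a n (introT andP (conj (ltW a_gt0) (andP a01).2)).
have : 0 <= (1 - a) ^+ n by rewrite exprn_ge0 // subr_ge0 (andP a01).2.
move: n_large; rewrite mulrA; set p := (1 - a) ^+ n; set q := n%:R * a.
have : 0 <= q by rewrite mulr_ge0 // ltW.
nra.
Qed.

Lemma round_price (al x : R) : 0 < al -> 0 <= x ->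
  exists k : nat, k%:R * al <= x < k%:R * al + al.
Proof.
move=> al_gt0 x_ge0; exists (Num.truncn (x / al)).
have := truncn_itv (divr_ge0 x_ge0 (ltW al_gt0)).
rewrite -addn1 natrD => /andP[lo hi].
rewrite -ler_pdivlMr // lo /=.
set k := Num.truncn (x / al) in hi *.
have -> : k%:R * al + al = (k%:R + 1) * al by rewrite mulrDl mul1r.
by rewrite -ltr_pdivrMr.
Qed.

Lemma round_alloc (m : nat) (H al phi : R) :
  0 < al <= 1 -> 1 <= H * m%:R -> 0 <= phi <= 1 ->
  exists g, alloc_level m H al g /\ 0 <= g <= phi /\ phi - g <= 2 * al.
Proof.
move=> al01 Hm_ge1 /andP[phi_ge0 phi_le1]; have /andP[al_gt0 al_le1] := al01.
case: (leP phi (2 * al)) => phi_vs_2al; first by exists 0; split; [left | lra].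
have grid_floor : al / (H * m%:R) <= al.
  by rewrite ler_pdivrMr ?(lt_le_trans ltr01) // ler_peMr // ltW.
have [|s s_below s_min] := ex_minnP (geometric_below (y := phi) al01 _); first lra.
case: s s_below s_min => [|n] s_below s_min.
  exists 1; rewrite expr0 in s_below; split; last lra.
  by right; exists 0%N; rewrite expr0; split => //; lra.
have n_above : phi < (1 - al) ^+ n.
  by rewrite ltNge; apply/negP => /s_min; rewrite ltnn.
have level_ge : (1 - al) * phi <= (1 - al) ^+ n.+1.
  by rewrite exprS ler_wpM2l ?ltW //; lra.
exists ((1 - al) ^+ n.+1); split; last split.
- right; exists n.+1; split => //; apply: le_trans grid_floor _.
  by apply: le_trans level_ge; nra.
- by rewrite s_below andbT; apply: le_trans level_ge; nra.
- nra.
Qed.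

(* Value of coordinatewise rounded-down allocations: with valuations in
   [0, H], each of the m coordinates loses at most H * eta. *)
Lemma alloc_value_rounding (m : nat) (v : valuation R m) (phi phi' : 'rV[R]_m)
    (H eta : R) :
  (forall i, 0 <= v 0 i <= H) ->
  (forall i, 0 <= phi' 0 i <= phi 0 i /\ phi 0 i - phi' 0 i <= eta) ->
  alloc_value v phi - eta * (m%:R * H) <= alloc_value v phi' <= alloc_value v phi.
Proof.
move=> v_bnd phi'_bnd.
have coord i : v 0 i * phi 0 i - H * eta <= v 0 i * phi' 0 i <= v 0 i * phi 0 i.
  have /andP[v_ge0 v_le] := v_bnd i; have [/andP[lo hi] gap] := phi'_bnd i.
  have : v 0 i * (phi 0 i - phi' 0 i) <= H * eta by rewrite ler_pM // subr_ge0.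
  by rewrite ler_wpM2l //; nra.
apply/andP; split; last by apply: ler_sum => i _; case/andP: (coord i).
have -> : eta * (m%:R * H) = \sum_(i < m) H * eta.
  by rewrite sumr_const card_ord -mulr_natl; ring.
by rewrite /alloc_value -sumrB; apply: ler_sum => i _; case/andP: (coord i).
Qed.

End Rounding.

Section MenuRounding.
Variables (R : realType) (ud : bool) (m l : nat) (H al d : R).
Hypothesis al01 : 0 < al <= 1.
Hypothesis Hm_ge1 : 1 <= H * m%:R.
Hypothesis d01 : 0 < d <= 1.

(* One entry: allocations are rounded down coordinatewise, the price is
   discounted by (1-d) and then rounded down to the price grid. *)
Lemma round_entry (e : 'rV[R]_m * R) :
  (forall i, 0 <= e.1 0 i <= 1) -> 0 <= e.2 ->
  exists e' : 'rV[R]_m * R,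
    [/\ forall i, alloc_level m H al (e'.1 0 i),
        price_level al e'.2,
        (1 - d) * e.2 - al <= e'.2 <= (1 - d) * e.2 &
        forall i, 0 <= e'.1 0 i <= e.1 0 i /\ e.1 0 i - e'.1 0 i <= 2 * al].
Proof.
move=> phi01 p_ge0; have /andP[al_gt0 _] := al01; have /andP[_ d_le1] := d01.
have [g g_spec] := fin_all_exists (fun i => round_alloc al01 Hm_ge1 (phi01 i)).
have dp_ge0 : 0 <= (1 - d) * e.2 by rewrite mulr_ge0 // subr_ge0.
have [k /andP[k_lo k_hi]] := round_price al_gt0 dp_ge0.
exists (\row_i g i, k%:R * al); split => /=.
- by move=> i; rewrite mxE; case: (g_spec i).
- by exists k.
- by rewrite k_lo andbT; lra.
- by move=> i; rewrite mxE; case: (g_spec i).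
Qed.

Lemma round_menu (rho : menu R m l) : valid_menu ud H rho ->
  exists rho' : menu R m l, disc_menus ud H al rho' /\
    forall j, (1 - d) * (rho j).2 - al <= (rho' j).2 <= (1 - d) * (rho j).2 /\
      forall i, 0 <= (rho' j).1 0 i <= (rho j).1 0 i /\
                (rho j).1 0 i - (rho' j).1 0 i <= 2 * al.
Proof.
move=> rho_valid; have /andP[d_gt0 d_le1] := d01.
have [F F_spec] := fin_all_exists (fun j =>
  round_entry (rho_valid j).1 (andP (rho_valid j).2.1).1).
exists [ffun j => F j]; split; last by move=> j; rewrite ffunE; case: (F_spec j).
split; [|split] => j; rewrite ffunE; case: (F_spec j) => // levels price prices coords.
have [phi01 [/andP[p_ge0 p_le] ud_sum]] := rho_valid j.
have /andP[_ p'_le] := prices.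
split; [|split].
- move=> i; have [/andP[lo hi] _] := coords i.
  by rewrite lo /=; apply: le_trans hi _; case/andP: (phi01 i).
- apply/andP; split; last by apply: le_trans p'_le _; nra.
  by have [k ->] := price; rewrite mulr_ge0 // ltW // (andP al01).1.
- move=> /ud_sum; apply: le_trans; apply: ler_sum => i _.
  by have [/andP[_ ->]] := coords i.
Qed.

End MenuRounding.

(* The discretized class X is finite: a menu of X is determined by, for each
   entry, a level index per item and a price index. *)
Section DiscreteMenuEnumeration.
Variables (R : realType) (ud : bool) (m l : nat) (H al : R) (A P : nat).
Hypothesis levels_bounded :
  forall s : nat, al / (H * m%:R) <= (1 - al) ^+ s -> (s < A)%N.
Hypothesis prices_bounded : forall k : nat, k%:R * al <= m%:R * H -> (k <= P)%N.

(* Level code 0 stands for allocation 0, code s+1 for (1-al)^s. *)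
Definition level_of_code (a : 'I_A.+1) : R :=
  if a == 0%N :> nat then 0 else (1 - al) ^+ a.-1.

Definition menu_code := {ffun 'I_l -> {ffun 'I_m -> 'I_A.+1} * 'I_P.+1}.

Definition decode_menu (c : menu_code) : menu R m l :=
  [ffun j => (\row_i level_of_code ((c j).1 i), ((c j).2 : nat)%:R * al)].

Lemma decode_menu_onto (rho : menu R m l) : disc_menus ud H al rho ->
  exists c, decode_menu c = rho.
Proof.
move=> [rho_valid [levels prices]].
have entry_code j : exists u : {ffun 'I_m -> 'I_A.+1} * 'I_P.+1,
    (forall i, level_of_code (u.1 i) = (rho j).1 0 i) /\
    ((u.2 : nat)%:R * al = (rho j).2).
  have level_code i : exists a : 'I_A.+1, level_of_code a = (rho j).1 0 i.
    case: (levels j i) => [->|[s [-> s_level]]]; first by exists ord0.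
    by exists (Ordinal (levels_bounded s_level : s.+1 < A.+1)%N).
  have [f f_spec] := fin_all_exists level_code.
  have [k k_price] := prices j.
  have k_le : (k < P.+1)%N.
    by rewrite ltnS prices_bounded // -k_price; case: (rho_valid j) => _ [/andP[]].
  by exists ([ffun i => f i], Ordinal k_le); split => //= i; rewrite ffunE.
have [F F_spec] := fin_all_exists entry_code.
exists [ffun j => F j]; apply/ffunP => j; rewrite !ffunE.
have [alloc_eq price_eq] := F_spec j.
rewrite [RHS]surjective_pairing price_eq; congr pair.
by apply/rowP => i; rewrite mxE alloc_eq.
Qed.

Lemma disc_menus_enum : exists s : seq (menu R m l),
  [/\ uniq s, disc_menus ud H al = [set` s]%classic
    & (size s <= (A.+1 ^ m * P.+1) ^ l)%N].
Proof.
exists [seq rho <- undup [seq decode_menu c | c <- enum {: menu_code}]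
          | `[< disc_menus ud H al rho >]].
split; first by rewrite filter_uniq // undup_uniq.
  apply/seteqP; split => rho /=; rewrite mem_filter; last by case/andP => /asboolP.
  move=> rho_disc; rewrite asboolT //= mem_undup.
  by have [c <-] := decode_menu_onto rho_disc; rewrite map_f ?mem_enum.
rewrite size_filter (leq_trans (count_size _ _)) // (leq_trans (size_undup _)) //.
by rewrite size_map -cardE card_ffun card_prod card_ffun !card_ord.
Qed.

End DiscreteMenuEnumeration.

(* Per-round revenue loss of rounding a valid menu into X: combining
   round_menu with revenue_perturbation, with value loss eta = 2 al (mH). *)
Lemma rounding_loss (R : realType) (ud : bool) (m l T : nat) (H al d : R)
    (v : nat -> valuation R m) (rho : menu R m l) :
  0 < al <= 1 -> 1 <= H * m%:R -> 0 < d <= 1 -> valid_menu ud H rho ->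
  (forall t i, (t < T)%N -> 0 <= v t 0 i <= H) ->
  exists2 rho' : menu R m l, disc_menus ud H al rho' &
    forall t, (t < T)%N -> revenue rho (v t) <=
      revenue rho' (v t) + (d * (m%:R * H) + (2 * al * (m%:R * H) + al) / d + al).
Proof.
move=> al01 Hm_ge1 d01 rho_valid v_bnd.
have [rho' [rho'_disc close]] := round_menu al01 Hm_ge1 d01 rho_valid.
exists rho' => // t tT; have /andP[al_gt0 _] := al01.
have mH_ge0 : 0 <= m%:R * H by rewrite mulrC; lra.
apply: revenue_perturbation => //.
- by case/andP: d01.
- by apply: mulr_ge0 => //; apply: mulr_ge0 => //; exact: ltW.
- exact: ltW.
- by move=> j; case: (rho_valid j) => _ [/andP[]].
- by move=> j; case: (close j).
- by move=> j; apply: alloc_value_rounding => [i|i]; [apply: v_bnd | case: (close j)].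
Qed.

Lemma wm_regret_discretized (R : realType) (ud : bool) (m l T : nat) (H al b eps : R)
    (v : nat -> valuation R m) (s : seq (menu R m l)) :
  0 < m%:R * H -> 0 < b -> uniq s -> disc_menus ud H al = [set` s]%classic ->
  (forall rho : menu R m l, valid_menu ud H rho -> exists2 rho' : menu R m l, rho' \in s &
     forall t, (t < T)%N -> revenue rho (v t) <= revenue rho' (v t) + eps) ->
  opt_revenue ud l H v T -
    \sum_(t < T) wm_expected_revenue (l := l) (disc_menus ud H al) H b v t
  <= T%:R * eps + b * T%:R * (m%:R * H) + m%:R * H * ln (size s)%:R / b.
Proof.
move=> M_gt0 b_gt0 s_uniq X_eq rounding.
set M := m%:R * H; pose gain (rho : menu R m l) t := revenue rho (v t).
have gain_bounded rho t : rho \in s -> (t < T)%N -> 0 <= gain rho t <= M.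
  move=> rho_in _; have [rho_valid _] : disc_menus ud H al rho by rewrite X_eq.
  rewrite revenue_ge0 revenue_le ?ltW //.
  by move=> j; case: (rho_valid j) => _ [/andP[]].
have alg_gain t : wm_expected_revenue (l := l) (disc_menus ud H al) H b v t =
    wm_gain s gain M b t by rewrite /wm_expected_revenue X_eq -!fsbig_seq.
pose zero_menu : menu R m l := [ffun=> (0, 0)].
have zero_valid : valid_menu ud H zero_menu.
  move=> j; rewrite ffunE; split=> [i|]; first by rewrite mxE lexx ler01.
  by rewrite lexx ltW //=; split=> // _; rewrite big1 // => i _; rewrite mxE.
under eq_bigr do rewrite alg_gain.
rewrite lerBlDl addrA; apply: ge_sup.
  by exists (\sum_(t < T) revenue zero_menu (v t)), zero_menu.
move=> _ [rho rho_valid <-]; have [rho' rho'_in loss] := rounding rho rho_valid.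
apply: le_trans (_ : cum_gain gain rho' T + T%:R * eps <= _).
  have -> : T%:R * eps = \sum_(t < T) eps by rewrite sumr_const card_ord mulr_natl.
  by rewrite /cum_gain -big_split; apply: ler_sum => t _; apply: loss.
have := wm_bound M_gt0 b_gt0 gain_bounded rho'_in; rewrite -/M; lra.
Qed.

(* With no menu entries every menu has revenue 0, so there is no regret. *)
Lemma wm_regret_empty (R : realType) (ud : bool) (m T : nat) (H : R)
    (v : nat -> valuation R m) :
  wm_regret ud 0 H v T <= 0.
Proof.
have rev0 (rho : menu R m 0) t : revenue rho (v t) = 0 by rewrite /revenue big_ord0.
rewrite /wm_regret big1 => [|t _]; last first.
  by rewrite /wm_expected_revenue fsbig1 ?mul0r // => rho _; rewrite rev0 mulr0.
rewrite subr0; apply: ge_sup.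
  exists 0, [ffun=> (0, 0)]; first by case.
  by rewrite big1.
by move=> _ [rho _ <-]; rewrite big1.
Qed.

Section GridSize.
Variables (R : realType) (m T : nat) (H al : R).
Hypothesis m_gt0 : (0 < m)%N.
Hypothesis T_gt0 : (0 < T)%N.
Hypothesis H_ge1 : 1 <= H.
Hypothesis al_T : al * T%:R = 1.

Definition H_ceil : nat := (Num.truncn H).+1.

Lemma H_ceil_gt : H < H_ceil%:R.
Proof. exact: truncnS_gt. Qed.

Lemma levels_bound (s : nat) : al / (H * m%:R) <= (1 - al) ^+ s ->
  (s < H_ceil * m * T * T)%N.
Proof.
have T_ge1 : 1 <= T%:R :> R by rewrite ler1n.
have m_ge1 : 1 <= m%:R :> R by rewrite ler1n.
have al_gt0 : 0 < al.
  have : 0 < al * T%:R by rewrite al_T.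
  by rewrite pmulr_lgt0 // ltr0n.
have al_le1 : al <= 1 by rewrite -al_T ler_peMr // ltW.
have Hm_gt0 : 0 < H * m%:R by rewrite mulr_gt0 ?ltr0n // (lt_le_trans ltr01 H_ge1).
move=> level.
have bern := geometric_bernoulli s (introT andP (conj (ltW al_gt0) al_le1)).
have p_ge0 : 0 <= (1 - al) ^+ s by rewrite exprn_ge0 // subr_ge0.
rewrite ler_pdivrMr // in level.
have s_small : s%:R * al ^+ 2 <= H * m%:R.
  have : 0 <= s%:R * al :> R by rewrite mulr_ge0 // ltW.
  by move: level bern; set p := (1 - al) ^+ s; nra.
have : s%:R <= H * m%:R * T%:R ^+ 2.
  have -> : s%:R = s%:R * al ^+ 2 * T%:R ^+ 2 :> R.
    by rewrite -mulrA -exprMn al_T expr1n mulr1.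
  by rewrite ler_pM2r // exprn_gt0 // (lt_le_trans ltr01).
rewrite -(ltr_nat R) !natrM => /le_lt_trans; apply.
rewrite -!mulrA expr2 !ltr_pM2r ?mulr_gt0 ?ltr0n //.
exact: H_ceil_gt.
Qed.

Lemma prices_bound (k : nat) : k%:R * al <= m%:R * H -> (k <= H_ceil * m * T)%N.
Proof.
move=> price_le; apply: ltnW; rewrite -(ltr_nat R) !natrM.
have -> : k%:R = k%:R * al * T%:R :> R by rewrite -mulrA al_T mulr1.
apply: le_lt_trans (_ : m%:R * H * T%:R < _); first by rewrite ler_pM2r ?ltr0n.
by rewrite ltr_pM2r ?ltr0n // mulrC ltr_pM2r ?ltr0n // H_ceil_gt.
Qed.

(* The number of grid levels is at most 3 (mHT)^2, so its logarithm is
   O(log(mHT)). *)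
Lemma ln_levels_bound :
  ln (H_ceil * m * T * T).+1%:R <= 2 + 2 * ln (m%:R * H * T%:R).
Proof.
set Q := m%:R * H * T%:R.
have m_ge1 : 1 <= m%:R :> R by rewrite ler1n.
have T_ge1 : 1 <= T%:R :> R by rewrite ler1n.
have mH_ge1 : 1 <= m%:R * H by rewrite mulr_ege1.
have Q_ge1 : 1 <= Q by rewrite /Q mulr_ege1.
have count_le : (H_ceil * m * T * T).+1%:R <= 3 * Q ^+ 2.
  have Hc_le : H_ceil%:R <= 2 * H.
    rewrite /H_ceil -natr1.
    have : (Num.truncn H)%:R <= H by rewrite truncn_le (le_trans ler01 H_ge1).
    have := H_ge1; set t := (Num.truncn H)%:R; lra.
  have mTT_ge0 : 0 <= m%:R * T%:R * T%:R :> R by rewrite !mulr_ge0.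
  have : (H_ceil * m * T * T)%:R <= 2 * H * (m%:R * T%:R * T%:R) :> R.
    by rewrite !natrM -!mulrA [X in _ <= X]mulrA ler_wpM2r // mulrA.
  have HmTT_le : H * (m%:R * T%:R * T%:R) <= Q ^+ 2.
    have -> : Q ^+ 2 = (m%:R * H) * (H * (m%:R * T%:R * T%:R)) by rewrite /Q; ring.
    by rewrite ler_peMl // mulr_ge0 // (le_trans ler01 H_ge1).
  have : 1 <= Q ^+ 2 by rewrite exprn_ege1.
  rewrite -natr1; lra.
have ln3 : ln (3 : R) <= 2.
  rewrite -[X in _ <= X]expRK ler_ln ?posrE ?expR_gt0 //.
  by have := expR_ge1Dx (2 : R); lra.
have Q_gt0 : 0 < Q := lt_le_trans ltr01 Q_ge1.
apply: le_trans (_ : ln (3 * Q ^+ 2) <= _).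
  by rewrite ler_ln ?posrE ?ltr0n // mulr_gt0 // exprn_gt0.
rewrite lnM ?posrE ?exprn_gt0 // lnXn //.
by rewrite mulr_natl; lra.
Qed.

End GridSize.

Lemma ln_code_count (R : realType) (N A P m l : nat) : (P <= A)%N ->
  (N <= (A.+1 ^ m * P.+1) ^ l)%N ->
  ln (N%:R : R) <= l%:R * (m%:R + 1) * ln A.+1%:R.
Proof.
move=> PA N_le; have [->|N_gt0] := posnP N.
  by rewrite ln0 // !mulr_ge0 ?addr_ge0 ?ln_natr_ge0.
have A1_gt0 : 0 < A.+1%:R :> R by rewrite ltr0n.
apply: le_trans (_ : ln ((A.+1 ^ m * P.+1) ^ l)%N%:R <= _).
  by rewrite ler_ln ?posrE ?ltr0n ?(leq_trans N_gt0) // ler_nat.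
have P1_le : ln P.+1%:R <= ln A.+1%:R :> R by rewrite ler_ln ?posrE ?ltr0n // ler_nat ltnS.
have -> : ln ((A.+1 ^ m * P.+1) ^ l)%N%:R = l%:R * (m%:R * ln A.+1%:R + ln P.+1%:R) :> R.
  rewrite natrX natrM natrX lnXn ?mulr_gt0 ?exprn_gt0 ?ltr0n //.
  by rewrite lnM ?posrE ?exprn_gt0 ?ltr0n // lnXn // !mulr_natl.
by rewrite -mulrA ler_wpM2l // mulrDl mul1r lerD2l.
Qed.

Lemma regret_arithmetic (R : realType) (m l T : nat) (H al r lnN : R) :
  (0 < m)%N -> (0 < l)%N -> (0 < T)%N -> 1 <= H ->
  al * T%:R = 1 -> 0 < r -> r * r = T%:R -> 0 <= lnN ->
  lnN <= l%:R * (m%:R + 1) * (2 + 2 * ln (m%:R * H * T%:R)) ->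
  T%:R * (r^-1 * (m%:R * H) + (2 * al * (m%:R * H) + al) / r^-1 + al)
    + r^-1 * T%:R * (m%:R * H) + m%:R * H * lnN / r^-1
  <= 10%:R * (m%:R ^+ 2 * H * l%:R * r) * (1 + ln (m%:R * H * T%:R)).
Proof.
move=> m_gt0 l_gt0 T_gt0 H_ge1 al_T r_gt0 rr lnN_ge0 lnN_le.
set L := ln (m%:R * H * T%:R) in lnN_le *; set M := m%:R * H.
have m_ge1 : 1 <= m%:R :> R by rewrite ler1n.
have l_ge1 : 1 <= l%:R :> R by rewrite ler1n.
have T_ge1 : 1 <= T%:R :> R by rewrite ler1n.
have r_ge1 : 1 <= r by nra.
have M_ge1 : 1 <= M by rewrite mulr_ege1.
have L_ge0 : 0 <= L by rewrite ln_ge0 // !mulr_ege1.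
have -> : T%:R * (r^-1 * M + (2 * al * M + al) / r^-1 + al) + r^-1 * T%:R * M
    + M * lnN / r^-1 = M * r * (4 + lnN) + r + 1.
  have T_neq0 : T%:R != 0 :> R by rewrite pnatr_eq0 -lt0n.
  have al_eq : al = (r * r)^-1 by rewrite rr; apply: (mulIf T_neq0); rewrite al_T mulVf.
  by rewrite al_eq -rr; field; rewrite gt_eqF.
have log_le : 6 + lnN <= 10 * (m%:R * l%:R) * (1 + L).
  have ml_ge1 : 1 <= m%:R * l%:R :> R by rewrite mulr_ege1.
  have : l%:R * (m%:R + 1) <= 2 * (m%:R * l%:R) :> R by nra.
  nra.
have -> : m%:R ^+ 2 * H * l%:R * r = M * r * (m%:R * l%:R) by rewrite /M; ring.
have Mr_ge1 : 1 <= M * r by rewrite mulr_ege1.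
have : M * r * (6 + lnN) <= M * r * (10 * (m%:R * l%:R) * (1 + L)).
  by rewrite ler_pM2l // (lt_le_trans ltr01).
nra.
Qed.

Theorem mainTheorem15 :
  exists C c : nat,
  forall (R : realType) (ud : bool) (m l T : nat) (H : R)
         (v : nat -> valuation R m),
    (0 < m)%N -> (0 < T)%N -> 1 <= H ->
    (forall (t : nat) (i : 'I_m), (t < T)%N -> 0 <= v t 0 i <= H) ->
    wm_regret ud l H v T <=
      C%:R * (m%:R ^+ 2 * H * l%:R * Num.sqrt (T%:R))
        * (1 + ln (m%:R * H * T%:R)) ^+ c.
Proof.
exists 10%N, 1%N => R ud m l T H v m_gt0 T_gt0 H_ge1 v_bnd; rewrite expr1.
have [->|l_gt0] := posnP l.
  by apply: le_trans (wm_regret_empty _ _ _ _) _; rewrite !(mulr0, mul0r).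
set al : R := T%:R^-1; set r := Num.sqrt T%:R.
have T_ge1 : 1 <= T%:R :> R by rewrite ler1n.
have al_T : al * T%:R = 1 by rewrite mulVf // pnatr_eq0 -lt0n.
have al01 : 0 < al <= 1 by rewrite invr_gt0 ltr0n T_gt0 invf_le1 ?ltr0n.
have r_gt0 : 0 < r by rewrite sqrtr_gt0 ltr0n.
have rr : r * r = T%:R by rewrite -expr2 sqr_sqrtr // ler0n.
have b01 : 0 < r^-1 <= 1 by rewrite invr_gt0 r_gt0 invf_le1 //; nra.
have Hm_ge1 : 1 <= H * m%:R by rewrite mulr_ege1 // ler1n.
have [s [s_uniq X_eq s_size]] := disc_menus_enum ud l
  (levels_bound m_gt0 T_gt0 H_ge1 al_T) (prices_bound m_gt0 T_gt0 al_T).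
rewrite /wm_regret -/al -/r.
apply: le_trans (wm_regret_discretized (eps := _) _ _ s_uniq X_eq _) _.
- by rewrite mulrC (lt_le_trans ltr01).
- by case/andP: b01.
- move=> rho rho_valid.
  have [rho' rho'_disc loss] := rounding_loss al01 Hm_ge1 b01 rho_valid v_bnd.
  exists rho'; last exact: loss.
  by move: rho'_disc; rewrite X_eq.
apply: regret_arithmetic => //; first exact: ln_natr_ge0.
apply: le_trans (ln_code_count R _ s_size) _; first by rewrite leq_pmulr.
rewrite ler_wpM2l ?mulr_ge0 ?addr_ge0 //.
exact: ln_levels_bound.
Qed.
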